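(* Let $p(x)\in\mathbb{C}[x_1,\ldots,x_n]$ be any polynomial. Then there exists a nonconfluent holonomic hypergeometric (Horn) system of the form $$x_j P_j(\theta)f(x)=Q_j(\theta)f(x),\qquad j=1,\ldots,n,$$ having $p(x)$ as one of its solutions. Moreover, this system can be chosen so that the left ideal in the Weyl algebra generated by the operators $x_jP_j(\theta)-Q_j(\theta)$, $j=1,\ldots,n$, admits a basis consisting of a family of pairwise commuting differential operators.
   Context: Notation: $x=(x_1,\ldots,x_n)$, $\theta=(\theta_1,\ldots,\theta_n)$ with $\theta_j=x_j\frac{\partial}{\partial x_j}$, $e_1,\ldots,e_n$ the standard basis of $\mathbb{Z}^n$. A function $\varphi(s)$ of $s\in\mathbb{C}^n$ is a hypergeometric (Ore–Sato) coefficient if for each $j$ the quotient $\varphi(s+e_j)/\varphi(s)$ is a rational function of $s$, written $P_j(s)/Q_j(s+e_j)$ with polynomials $P_j,Q_j$. The Horn hypergeometric system defined by $\varphi$ is the system $x_jP_j(\theta)f=Q_j(\theta)f$, $j=1,\ldots,n$; any (formal) Laurent series $\sum_s\varphi(s)x^s$ is a formal solution of it. The system is holonomic if it has finite holonomic rank, and nonconfluent if $\deg P_j=\deg Q_j$ for every $j=1,\ldots,n$. *)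

From HB Require Import structures.
From mathcomp Require Import all_boot all_order all_algebra.
From mathcomp Require Import mpoly.
From mathcomp Require Import Rstruct complex.

Set Implicit Arguments.
Unset Strict Implicit.
Unset Printing Implicit Defensive.

Import GRing.Theory.
Local Open Scope ring_scope.

Definition C : Type := complex Rdefinitions.R.

Notation Pol n := {mpoly C[n]}.

(* Differential operators are represented through their (faithful, since
   char C = 0) action on C[x]. *)
Definition Op (n : nat) := Pol n -> Pol n.

Definition mulX n (i : 'I_n) : Op n := fun f => 'X_i * f.
Definition der n (i : 'I_n) : Op n := fun f => mderiv i f.

Inductive weyl (n : nat) : Op n -> Prop :=
| weyl_X (i : 'I_n) : weyl (mulX i)
| weyl_D (i : 'I_n) : weyl (der i)
| weyl_scal (c : C) : weyl (fun f => c *: f)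
| weyl_add (A B : Op n) : weyl A -> weyl B -> weyl (fun f => A f + B f)
| weyl_comp (A B : Op n) : weyl A -> weyl B -> weyl (fun f => A (B f)).

Definition theta n (i : 'I_n) : Op n := fun f => 'X_i * mderiv i f.

Definition thetam n (m : 'X_{1..n}) : Op n :=
  fun f => foldr (fun i g => iter (m i) (theta i) g) f (enum 'I_n).

Definition eval_theta n (P : Pol n) : Op n :=
  fun f => \sum_(m <- msupp P) P@_m *: thetam m f.

Definition horn_op n (j : 'I_n) (P Q : Pol n) : Op n :=
  fun f => 'X_j * eval_theta P f - eval_theta Q f.

Definition derm n (b : 'X_{1..n}) : Op n := fun f => mderivm b f.

Definition in_left_ideal n k (L : 'I_k -> Op n) (A : Op n) : Prop :=
  exists B : 'I_k -> Op n, (forall i, weyl (B i)) /\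
    forall f, A f = \sum_(i < k) B i (L i f).

(* Finite holonomic rank of the left ideal I = D.L: the rank is
   dim_{C(x)} C(x)<d> / C(x)<d> I = dim_{C(x)} S^-1 (D/I), S = C[x]\{0};
   it is finite iff finitely many classes of monomials d^a (a in B) span
   D/I up to C[x]-torsion, i.e. for every b there is q <> 0 with
   q d^b in sum_(a in B) C[x] d^a + I. *)
Definition finite_holonomic_rank n k (L : 'I_k -> Op n) : Prop :=
  exists Bs : seq 'X_{1..n},
    forall b : 'X_{1..n}, exists (q : Pol n) (c : 'X_{1..n} -> Pol n),
      q != 0 /\
      in_left_ideal L (fun f => q * derm b f - \sum_(a <- Bs) c a * derm a f).

Definition shift n (s : 'I_n -> C) (j : 'I_n) : 'I_n -> C :=
  fun i => s i + (i == j)%:R.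

(* phi : C^n -> C is a hypergeometric (Ore-Sato) coefficient with
   phi(s+e_j)/phi(s) = P_j(s)/Q_j(s+e_j), written without division:
   phi is not identically zero and
   phi(s+e_j) Q_j(s+e_j) = P_j(s) phi(s) for all s. *)
Definition ore_sato_coeff n (phi : ('I_n -> C) -> C) (P Q : 'I_n -> Pol n) :=
  (exists s, phi s != 0) /\
  forall (j : 'I_n) (s : 'I_n -> C),
    phi (shift s j) * (Q j).@[shift s j] = (P j).@[s] * phi s.

(* Nonconfluent: deg P_j = deg Q_j for all j (msize = total degree + 1). *)
Definition nonconfluent n (P Q : 'I_n -> Pol n) :=
  forall j, msize (P j) = msize (Q j).

From HB Require Import structures.
From mathcomp Require Import all_boot all_order all_algebra.
From mathcomp Require Import mpoly.
From mathcomp Require Import Rstruct complex.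
From mathcomp Require Import ring.
From Stdlib Require Import FunctionalExtensionality.
Import GRing.Theory.
Local Open Scope ring_scope.
Set Implicit Arguments.
Unset Strict Implicit.

(* Take M > deg p and P_j = Q_j = s_j (s_j - 1) ... (s_j - M + 1).  By Euler's
   identity P_j(theta) = x_j^M d_j^M, so the Horn operator is
   g_j d_j^M with g_j = (x_j - 1) x_j^M; it kills every polynomial of degree < M
   in x_j.  Operators in distinct variables commute, so the Horn operators are
   themselves a commuting basis of their ideal.  Since g^(k+1) d_j^(M+k) lies in
   D g d_j^M, every d^b with some b_j >= M is C[x]-torsion modulo the ideal,
   which gives finite holonomic rank.  As M >= 1, P_j(0) = Q_j(0) = 0, so the
   indicator of s = 0 satisfies the Ore-Sato recurrences. *)

Lemma prod_natr_sub (R : pzRingType) (a M : nat) :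
  \prod_(k < M) (a%:R - k%:R : R) = (a ^_ M)%:R.
Proof.
elim: M => [|M ih]; first by rewrite big_ord0 ffactn0.
rewrite big_ord_recr /= ih ffactnSr natrM.
have [leMa|ltaM] := leqP M a; first by rewrite natrB.
by rewrite ffact_small // !mul0r.
Qed.

Section Operators.
Variable n : nat.
Implicit Types (f g h q P : Pol n) (s m b : 'X_{1..n}) (i j : 'I_n).
Implicit Types (v : 'I_n -> C).

Lemma linear_mpolyE (A : Op n) f : linear A ->
  A f = \sum_(m <- msupp f) f@_m *: A 'X_[m].
Proof.
move=> linA; have A0 : A 0 = 0.
  have := linA 1 0 0; rewrite scaler0 add0r scale1r => h.
  by apply: (addrI (A 0)); rewrite addr0 -h.
rewrite {1}[f]mpolyE; elim: (msupp f) => [|m r ih]; first by rewrite !big_nil A0.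
by rewrite !big_cons linA ih.
Qed.

Lemma linear_vanish (A : Op n) f : linear A ->
  (forall m, m \in msupp f -> A 'X_[m] = 0) -> A f = 0.
Proof.
move=> linA A0; rewrite linear_mpolyE // big_seq big1 // => m /A0 ->.
exact: scaler0.
Qed.

Lemma linear_eq_mpolyX (A B : Op n) : linear A -> linear B ->
  (forall m, A 'X_[m] = B 'X_[m]) -> A =1 B.
Proof.
move=> linA linB eAB f; rewrite !linear_mpolyE //.
by apply: eq_bigr => m _; rewrite eAB.
Qed.

Lemma linear_iter (A : Op n) k : linear A -> linear (iter k A).
Proof. by move=> linA; elim: k => // k ih c f g /=; rewrite ih linA. Qed.

Lemma theta_linear i : linear (theta i).
Proof. by move=> c f g; rewrite /theta mderivD mderivZ mulrDr scalerAr. Qed.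

Lemma theta_mpolyX i s : theta i 'X_[s] = (s i)%:R *: 'X_[s].
Proof.
rewrite /theta mderivX -scalerAr -mpolyXD.
have [->|si_gt0] := posnP (s i); first by rewrite !scale0r.
congr (_ *: 'X_[_]); apply/mnmP => k; rewrite mnmDE mnmBE mnm1E.
by case: eqP => [<-|_]; rewrite ?subn0 // add1n subn1 prednK.
Qed.

Lemma thetam_linear m : linear (thetam m).
Proof.
move=> c f g; rewrite /thetam; elim: (enum 'I_n) => //= i r ih.
by rewrite ih (linear_iter (m i) (theta_linear i)).
Qed.

Lemma thetam_mpolyX m s :
  thetam m 'X_[s] = (\prod_(i < n) (s i)%:R ^+ m i) *: 'X_[s].
Proof.
rewrite /thetam -big_enum /=.
elim: (enum 'I_n) => /= [|i r ih]; first by rewrite big_nil scale1r.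
rewrite ih big_cons; elim: (m i) => [|k ihk] /=; first by rewrite mul1r.
rewrite ihk /theta mderivZ -scalerAr -/(theta i _) theta_mpolyX scalerA.
by rewrite exprS mulrC mulrA.
Qed.

Definition point_of_mnm s : 'I_n -> C := fun i => (s i)%:R.

Lemma eval_theta_mpolyX P s :
  eval_theta P 'X_[s] = P.@[point_of_mnm s] *: 'X_[s].
Proof.
rewrite /eval_theta mevalE scaler_suml; apply: eq_bigr => m _.
by rewrite thetam_mpolyX scalerA.
Qed.

Lemma eval_theta_linear P : linear (eval_theta P).
Proof.
move=> c f g; rewrite /eval_theta scaler_sumr -big_split /=.
by apply: eq_bigr => m _; rewrite thetam_linear scalerDr !scalerA mulrC.
Qed.

Definition falling_poly j M : Pol n := \prod_(k < M) ('X_j - (k%:R)%:MP).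

Lemma meval_falling_poly j M v :
  (falling_poly j M).@[v] = \prod_(k < M) (v j - k%:R).
Proof.
rewrite /falling_poly rmorph_prod; apply: eq_bigr => k _.
by rewrite rmorphB /= mevalXU mevalC.
Qed.

Lemma eval_theta_falling_poly j M f :
  eval_theta (falling_poly j M) f = 'X_j ^+ M * mderivm (U_(j) *+ M) f.
Proof.
move: f; apply: linear_eq_mpolyX => [|c g h|s]; first exact: eval_theta_linear.
  by rewrite mderivmD mderivmZ mulrDr scalerAr.
rewrite eval_theta_mpolyX meval_falling_poly prod_natr_sub mderivnX.
rewrite -scalerAr mpolyXn -mpolyXD.
have [leMs|ltsM] := leqP M (s j); last by rewrite ffact_small // !scale0r.
congr (_ *: 'X_[_]); apply/mnmP => i; rewrite mnmDE mnmBE !mulmnE mnm1E.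
by case: eqP => [<-|_]; rewrite ?mul1n ?subnKC // !mul0n subn0.
Qed.

Definition horn_coeff j M : Pol n := ('X_j - 1) * 'X_j ^+ M.

Definition horn_falling M j : Op n :=
  horn_op j (falling_poly j M) (falling_poly j M).

Lemma horn_fallingE M j f :
  horn_falling M j f = horn_coeff j M * mderivm (U_(j) *+ M) f.
Proof.
by rewrite /horn_falling /horn_op eval_theta_falling_poly -mulrA mulrBl mul1r.
Qed.

Lemma mderivn_small j M f : (msize f <= M)%N -> mderivm (U_(j) *+ M) f = 0.
Proof.
move=> szf; apply: linear_vanish => [c g h|s sf]; first by rewrite mderivmD mderivmZ.
have ltsM : (s j < M)%N.
  apply: leq_trans szf; apply: leq_ltn_trans (msize_mdeg_lt sf).
  by rewrite mdegE (bigD1 j) //= leq_addr.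
by rewrite mderivnX ffact_small // scale0r.
Qed.

Lemma mderivXi i j : mderiv i ('X_j : Pol n) = (i == j)%:R.
Proof.
rewrite mderivX mnm1E eq_sym; case: eqP => [->|_]; last by rewrite scale0r.
have -> : (U_(j) - U_(j) = 0 :> 'X_{1..n})%MM.
  by apply/mnmP => k; rewrite mnmBE subnn mnm0E.
by rewrite scale1r mpolyX0.
Qed.

Lemma mderiv_exp_eq0 i q k : mderiv i q = 0 -> mderiv i (q ^+ k) = 0.
Proof.
move=> dq0; elim: k => [|k ih]; first by rewrite expr0 -mpolyC1 mderivC.
by rewrite exprS mderivM dq0 ih mul0r mulr0 addr0.
Qed.

Lemma mderiv_exp i q k :
  mderiv i (q ^+ k.+1) = k.+1%:R * (q ^+ k * mderiv i q).
Proof.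
elim: k => [|k ih]; first by rewrite expr0 !mul1r.
rewrite [in LHS]exprS mderivM ih -[k.+2]addn1 natrD mulrDl mul1r addrC.
by congr (_ + _); rewrite ?exprS; ring.
Qed.

Lemma mderivm_mull b q f : (forall i, b i != 0%N -> mderiv i q = 0) ->
  mderivm b (q * f) = q * mderivm b f.
Proof.
move=> dq0; rewrite /mderivm; elim: (enum 'I_n) => //= i r ->.
have [bi0|/dq0 dqi] := eqVneq (b i) 0%N; first by rewrite bi0.
by elim: (b i) => //= k ->; rewrite mderivM dqi mul0r add0r.
Qed.

Lemma mderiv_horn_coeff i j M : i != j -> mderiv i (horn_coeff j M) = 0.
Proof.
move=> /negPf neij; have dX : mderiv i ('X_j : Pol n) = 0 by rewrite mderivXi neij.
rewrite mderivM mderivB dX -mpolyC1 mderivC subr0 mul0r add0r.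
by rewrite mderiv_exp_eq0 ?mulr0.
Qed.

Lemma horn_falling_comm M i j f :
  horn_falling M i (horn_falling M j f) = horn_falling M j (horn_falling M i f).
Proof.
have [-> //|neij] := eqVneq i j.
have indep k l : k != l -> forall g, mderivm (U_(k) *+ M) (horn_coeff l M * g) =
                                     horn_coeff l M * mderivm (U_(k) *+ M) g.
  move=> nekl g; apply: mderivm_mull => k'; rewrite mulmnE mnm1E.
  by have [<- _|_] := eqVneq k k'; [exact: mderiv_horn_coeff | rewrite mul0n eqxx].
rewrite !horn_fallingE indep // indep 1?eq_sym // -!mderivmDm addmC.
exact: mulrCA.
Qed.

Lemma weyl_ext (A B : Op n) : weyl A -> A =1 B -> weyl B.
Proof. by move=> wA /functional_extensionality eAB; rewrite -eAB. Qed.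

Lemma weyl0 : weyl (fun f : Pol n => 0).
Proof. by apply: weyl_ext (weyl_scal n 0) _ => f; rewrite scale0r. Qed.

Lemma weyl_id : weyl (fun f : Pol n => f).
Proof. by apply: weyl_ext (weyl_scal n 1) _ => f; rewrite scale1r. Qed.

Lemma weyl_sum (T : Type) (r : seq T) (F : T -> Op n) :
  (forall x, weyl (F x)) -> weyl (fun f => \sum_(x <- r) F x f).
Proof.
move=> wF; elim: r => [|x r ih].
  by apply: weyl_ext weyl0 _ => f; rewrite big_nil.
by apply: weyl_ext (weyl_add (wF x) ih) _ => f; rewrite big_cons.
Qed.

Lemma weyl_mul_prod (T : Type) (r : seq T) (F : T -> Pol n) :
  (forall x, weyl (fun f => F x * f)) -> weyl (fun f => (\prod_(x <- r) F x) * f).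
Proof.
move=> wF; elim: r => [|x r ih].
  by apply: weyl_ext weyl_id _ => f; rewrite big_nil mul1r.
by apply: weyl_ext (weyl_comp (wF x) ih) _ => f; rewrite big_cons mulrA.
Qed.

Lemma weyl_mul q : weyl (fun f => q * f).
Proof.
have wX i k : weyl (fun f => 'X_i ^+ k * f).
  rewrite -(card_ord k) -prodr_const; apply: weyl_mul_prod => _; exact: weyl_X.
apply: weyl_ext (_ : weyl (fun f => \sum_(m <- msupp q) q@_m *: ('X_[m] * f))) _.
  apply: weyl_sum => m; apply: weyl_comp (weyl_scal n _) _.
  by rewrite mpolyXE_id; apply: weyl_mul_prod.
move=> f; rewrite [in RHS](mpolyE q) mulr_suml.
by apply: eq_bigr => m _; rewrite scalerAl.
Qed.

Lemma weyl_mderivm b : weyl (fun f => mderivm b f).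
Proof.
rewrite /mderivm; elim: (enum 'I_n) => [|i r ih]; first exact: weyl_id.
apply: weyl_comp _ ih; elim: (b i) => [|k ihk]; first exact: weyl_id.
exact: weyl_comp (weyl_D i) ihk.
Qed.

Lemma weyl_horn_falling M j : weyl (horn_falling M j).
Proof.
apply: weyl_ext (weyl_comp (weyl_mul (horn_coeff j M)) (weyl_mderivm _)) _ => f.
by rewrite horn_fallingE.
Qed.

(* g^(k+2) d_j^(k+1) h = g d_j (g^(k+1) d_j^k h) - (k+1) g' g^(k+1) d_j^k h *)
Lemma weyl_mul_exp_mderivn g j k : exists B : Op n, weyl B /\
  forall h, g ^+ k.+1 * mderivm (U_(j) *+ k) h = B (g * h).
Proof.
elim: k => [|k [B [wB eB]]].
  by exists id; split=> [|h]; [exact: weyl_id | rewrite expr1 mulm0n mderivm0m].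
exists (fun f => g * mderiv j (B f) + (- (k.+1%:R * mderiv j g)) * B f); split.
  apply: weyl_add; first exact: weyl_comp (weyl_mul g) (weyl_comp (weyl_D j) wB).
  exact: weyl_comp (weyl_mul _) wB.
move=> h; rewrite -eB mulmS addmC mderivmDm mderivmU1m mderivM mderiv_exp.
rewrite !exprS; ring.
Qed.

Lemma mpolyXi_neq0 j : ('X_j : Pol n) != 0.
Proof.
apply/eqP => /(congr1 (mcoeff U_(j))).
by rewrite mcoeffX eqxx mcoeff0; apply/eqP/oner_neq0.
Qed.

Lemma horn_coeff_neq0 j M : horn_coeff j M != 0.
Proof.
rewrite mulf_neq0 ?expf_neq0 ?mpolyXi_neq0 //; apply/eqP => /(congr1 (mcoeff U_(j))).
have U0 : (U_(j) == 0 :> 'X_{1..n})%MM = false by apply/negbTE; rewrite -mdeg_eq0 mdeg1.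
by rewrite mcoeffB mcoeffX eqxx mcoeff1 U0 mcoeff0 subr0; apply/eqP/oner_neq0.
Qed.

Lemma in_left_ideal_ext k (L : 'I_k -> Op n) (A A' : Op n) :
  A =1 A' -> in_left_ideal L A -> in_left_ideal L A'.
Proof. by move=> eA [B [wB eB]]; exists B; split=> // f; rewrite -eA. Qed.

Lemma in_left_ideal0 k (L : 'I_k -> Op n) : in_left_ideal L (fun=> 0).
Proof. by exists (fun _ _ => 0); split=> [_|f]; [exact: weyl0 | rewrite big1]. Qed.

Lemma finite_holonomic_rank_box k (L : 'I_k -> Op n) M :
  (forall b j, (M <= b j)%N ->
    exists2 q, q != 0 & in_left_ideal L (fun f => q * mderivm b f)) ->
  finite_holonomic_rank L.
Proof.
move=> hL; pose box := [seq val a | a : 'X_{1..n < (n * M).+1}].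
exists box => b; have [inbox|] := boolP [forall i, b i < M]%N; last first.
  rewrite negb_forall => /existsP [j]; rewrite -leqNgt => /hL [q q0 Lq].
  exists q, (fun=> 0); split=> //; apply: in_left_ideal_ext Lq => f.
  by rewrite big1 ?subr0 // => a _; rewrite mul0r.
exists 1, (fun a => (a == b)%:R); split; first exact: oner_neq0.
apply: in_left_ideal_ext (in_left_ideal0 L) => f.
have b_box : b \in box.
  have mdeg_b : (mdeg b < (n * M).+1)%N.
    rewrite ltnS mdegE -[n in (n * M)%N]card_ord -sum_nat_const.
    by apply: leq_sum => i _; apply/ltnW/(forallP inbox).
  by apply/mapP; exists (BMultinom mdeg_b); rewrite ?mem_enum.
have box_uniq : uniq box by rewrite map_inj_uniq ?enum_uniq //; exact: val_inj.
rewrite (bigD1_seq b) //= eqxx mul1r.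
by rewrite big1 ?addr0 ?mul1r ?subrr // => a /negPf ->; rewrite mul0r.
Qed.

Lemma horn_falling_left_ideal M b j : (M <= b j)%N ->
  in_left_ideal (horn_falling M)
    (fun f => horn_coeff j M ^+ (b j - M).+1 * mderivm b f).
Proof.
move=> leMb; set k := (b j - M)%N; set c := (b - U_(j) *+ b j)%MM.
have [B [wB eB]] := weyl_mul_exp_mderivn (horn_coeff j M) j k.
have eb : b = (U_(j) *+ M + U_(j) *+ k + c)%MM.
  apply/mnmP => i; rewrite !mnmDE mnmBE !mulmnE mnm1E.
  by case: eqP => [<-|_]; rewrite ?mul1n ?mul0n ?subnn ?addn0 ?subnKC ?subn0.
exists (fun i => if i == j then (fun f => mderivm c (B f)) else fun=> 0); split.
  by move=> i; case: eqP => _; [exact: weyl_comp (weyl_mderivm c) wB | exact: weyl0].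
move=> f; rewrite (bigD1 j) //= eqxx big1 => [|i /negPf -> //].
rewrite addr0 horn_fallingE -eB eb !mderivmDm.
apply/esym/mderivm_mull => i ci; apply: mderiv_exp_eq0; apply: mderiv_horn_coeff.
by apply: contraNneq ci => ->; rewrite mnmBE mulmnE mnm1E eqxx mul1n subnn.
Qed.

Lemma finite_holonomic_rank_horn_falling M :
  finite_holonomic_rank (horn_falling M).
Proof.
apply: (@finite_holonomic_rank_box _ _ M) => b j leMb.
exists (horn_coeff j M ^+ (b j - M).+1); first exact: expf_neq0 (horn_coeff_neq0 j M).
exact: horn_falling_left_ideal.
Qed.

Lemma meval_falling_poly_eq0 j M v :
  v j = 0 -> (falling_poly j M.+1).@[v] = 0.
Proof.
by move=> vj0; rewrite meval_falling_poly big_ord_recl vj0 sub0r oppr0 mul0r.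
Qed.

Definition delta0 v : C := if [forall i, v i == 0] then 1 else 0.

Lemma ore_sato_coeff_delta0 (P Q : 'I_n -> Pol n) :
  (forall j v, (forall i, v i = 0) -> (P j).@[v] = 0 /\ (Q j).@[v] = 0) ->
  ore_sato_coeff delta0 P Q.
Proof.
move=> PQ0; split.
  exists (fun=> 0); rewrite /delta0 (_ : [forall i, _] = true) ?oner_neq0 //.
  exact/forallP.
have delta0_eq0 v R : (forall v, (forall i, v i = 0) -> R.@[v] = 0) ->
    delta0 v * R.@[v] = 0.
  rewrite /delta0 => R0; case: ifP => [/forallP v0|_]; last by rewrite mul0r.
  by rewrite R0 ?mulr0 // => i; apply/eqP.
by move=> j s; rewrite [RHS]mulrC !delta0_eq0 // => v /(PQ0 j) [].
Qed.

End Operators.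

Theorem theorem3p1 (n : nat) (p : {mpoly C[n]}) :
  exists (P Q : 'I_n -> {mpoly C[n]}) (phi : ('I_n -> C) -> C),
    [/\ ore_sato_coeff phi P Q,
        nonconfluent P Q,
        finite_holonomic_rank (fun j => horn_op j (P j) (Q j)),
        (forall j, horn_op j (P j) (Q j) p = 0) &
        exists (m : nat) (G : 'I_m -> Op n),
          [/\ forall i, weyl (G i),
              forall i i' f, G i (G i' f) = G i' (G i f) &
              forall A, in_left_ideal (fun j => horn_op j (P j) (Q j)) A
                        <-> in_left_ideal G A]].
Proof.
set M := (msize p).+1; pose R (j : 'I_n) := falling_poly j M.
exists R, R, (@delta0 n); split=> //.
- by apply: ore_sato_coeff_delta0 => j v v0; rewrite /R meval_falling_poly_eq0.
- exact: finite_holonomic_rank_horn_falling.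
- move=> j; change (horn_falling M j p = 0).
  by rewrite horn_fallingE mderivn_small ?mulr0 // ltnW.
exists n, (@horn_falling n M); split=> //.
- exact: weyl_horn_falling.
- exact: horn_falling_comm.
Qed.
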